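(* Every Camina group is a generalized B-group.
   Context: For a finite group $G$ with identity $e$ and $X\subseteq G$, write $\underline{X}=\sum_{x\in X}x\in\mathbb{Z}G$. A subring $\mathcal{A}$ of $\mathbb{Z}G$ is an S-ring over $G$ if there is a partition $\mathcal{S}(\mathcal{A})$ of $G$ (basic sets) such that $\{e\}\in\mathcal{S}(\mathcal{A})$, $X\in\mathcal{S}(\mathcal{A})\Rightarrow X^{-1}\in\mathcal{S}(\mathcal{A})$, and $\mathcal{A}$ is the $\mathbb{Z}$-span of $\{\underline{X}: X\in\mathcal{S}(\mathcal{A})\}$. An $\mathcal{A}$-subgroup is a subgroup of $G$ that is a union of basic sets; $\mathcal{A}$ is primitive if its only $\mathcal{A}$-subgroups are $\{e\}$ and $G$. $\mathcal{A}$ is central if $\mathcal{A}\subseteq\mathcal{Z}(\mathbb{Z}G)$ (the center of $\mathbb{Z}G$, which is itself an S-ring whose basic sets are the conjugacy classes). The trivial S-ring is $\mathbb{Z}e+\mathbb{Z}\underline{G}$. A central S-ring over $G$ is proper if it is different from both $\mathcal{Z}(\mathbb{Z}G)$ and the trivial S-ring. A finite group $G$ is a generalized B-group if no proper central S-ring over $G$ is primitive. A finite group $G$ is a Camina group if it has a normal subgroup $H$ with $\{e\}\neq H\neq G$ such that every coset $xH$ with $x\notin H$ is contained in a single conjugacy class of $G$. *)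

From HB Require Import structures.
From mathcomp Require Import all_boot all_order all_algebra all_fingroup.
Set Implicit Arguments. Unset Strict Implicit. Unset Printing Implicit Defensive.
Import GRing.Theory.

Section SRing.
Variable gT : finGroupType.

(* Elements of the group ring Z[gT] are integer-valued functions on gT;
   ZG G is the subring of those supported on G. *)
Definition grel := {ffun gT -> int}.

Definition inZG (G : {set gT}) (a : grel) : Prop :=
  forall x, x \notin G -> a x = 0%R.

Definition gmul (G : {set gT}) (a b : grel) : grel :=
  [ffun g => (\sum_(h in G) a h * b (h^-1 * g)%g)%R].

Definition uline (X : {set gT}) : grel := [ffun x => Posz (nat_of_bool (x \in X))].

Definition span (P : {set {set gT}}) (a : grel) : Prop :=
  exists c : {set gT} -> int, a = (\sum_(X in P) uline X *~ c X)%R.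

(* P is the set of basic sets of an S-ring over G (the S-ring being span P) *)
Definition is_Sring (G : {set gT}) (P : {set {set gT}}) : Prop :=
  [/\ partition P G,
      [set 1%g] \in P,
      (forall X, X \in P -> X^-1%g \in P) &
      (forall a b, span P a -> span P b -> span P (gmul G a b))].

Definition centerZG (G : {set gT}) (a : grel) : Prop :=
  inZG G a /\ forall b, inZG G b -> gmul G a b = gmul G b a.

Definition trivZG (G : {set gT}) (a : grel) : Prop :=
  exists m n : int, a = (uline [set 1%g] *~ m + uline G *~ n)%R.

Definition central_Sring (G : {set gT}) (P : {set {set gT}}) : Prop :=
  forall a, span P a -> centerZG G a.

Definition proper_Sring (G : {set gT}) (P : {set {set gT}}) : Prop :=
  ~ (forall a, span P a <-> centerZG G a) /\
  ~ (forall a, span P a <-> trivZG G a).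

Definition Asubgroup (G : {set gT}) (P : {set {set gT}}) (H : {group gT}) : Prop :=
  H \subset G /\ exists Q : {set {set gT}}, Q \subset P /\ (H : {set gT}) = cover Q.

Definition primitive_Sring (G : {set gT}) (P : {set {set gT}}) : Prop :=
  forall H : {group gT}, Asubgroup G P H -> (H :=: 1)%g \/ (H :=: G).

Definition generalized_B_group (G : {group gT}) : Prop :=
  forall P : {set {set gT}}, is_Sring G P -> central_Sring G P ->
    proper_Sring G P -> ~ primitive_Sring G P.

Definition Camina_group (G : {group gT}) : Prop :=
  exists H : {group gT},
    [/\ (H <| G)%g, (H :!=: 1)%g, H :!=: G &
        forall x, x \in G :\: H -> (x *: H \subset x ^: G)%g].

End SRing.

From Pilot Require Import Defs.
From mathcomp Require Import all_boot all_order all_algebra all_fingroup.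
Set Implicit Arguments. Unset Strict Implicit. Unset Printing Implicit Defensive.
Import GRing.Theory.
Local Open Scope group_scope.

(* A central S-ring has basic sets closed under conjugation, so by the Camina
   property every basic set meeting G \ H is a union of H-cosets there.
   Suppose the S-ring is primitive.  A nontrivial basic set inside H would
   generate a proper A-subgroup inside H, and a basic set disjoint from H would
   have an A-subgroup containing H as its right stabiliser.  Otherwise every
   nontrivial basic set X meets both H and G \ H; comparing the structure
   constants of two such sets X <> Y at a point of X inside H and at a point
   of X outside H, modulo |H|, shows that X is closed under multiplication by
   Y inside H, and conjugation then forces X = Y.  So the S-ring is trivial. *)

Lemma dvdn_card_mulr_closed (gT : finGroupType) (H : {group gT}) (A : {set gT}) :
  {in A & H, forall u k, u * k \in A} -> (#|H| %| #|A|)%N.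
Proof.
move=> mulAH.
rewrite -[#|A|]sum1_card (partition_big_imset (fun x => x *: H)) /=.
rewrite dvdn_sum // => _ /imsetP[a Aa ->].
suff ->: (\sum_(x in A | x *: H == a *: H) 1 = #|a *: H|)%N by rewrite card_lcoset.
rewrite -sum1_card; apply: eq_bigl => x; apply/andP/idP => [[_ /eqP <-]|xa].
  exact: lcoset_refl.
split; last by apply/eqP/lcoset_eqP.
by case/lcosetP: xa => k Hk ->; apply: mulAH.
Qed.

Definition fibre (gT : finGroupType) (G A B : {set gT}) (g : gT) : {set gT} :=
  [set h in G | (h \in A) && (h^-1 * g \in B)].

Lemma gmul_uline (gT : finGroupType) (G A B : {set gT}) g :
  gmul G (uline A) (uline B) g = Posz #|fibre G A B g|.
Proof.
rewrite /gmul ffunE -sum1dep_card.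
rewrite (big_morph Posz PoszD (erefl _)) big_mkcond [RHS]big_mkcond /=.
apply: eq_bigr => h _; rewrite !ffunE.
by case: (h \in G); case: (h \in A); case: (h^-1 * g \in B).
Qed.

Lemma trivial_elementE (gT : finGroupType) (G : {group gT}) (m n : int) g :
  (uline [set 1%g] *~ m + uline G *~ n)%R g =
  if g == 1 then (m + n)%R else if g \in G then n else 0%R.
Proof.
rewrite ffunE !ffunMzE !ffunE inE.
case: (g =P 1) => [->|_]; first by rewrite group1 !mulrzz !mul1r.
by case: (g \in G); rewrite ?mulrzz ?mul1r ?mul0r ?add0r ?addr0.
Qed.

Section Partition.
Variables (gT : finGroupType) (G : {set gT}) (P : {set {set gT}}).
Hypothesis pP : partition P G.

Lemma block_eq X Y g : X \in P -> Y \in P -> g \in X -> g \in Y -> X = Y.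
Proof.
move=> XP YP gX gY; have tP := partition_trivIset pP.
by rewrite -(def_pblock tP XP gX) (def_pblock tP YP gY).
Qed.

Lemma pblockP x : x \in G -> pblock P x \in P /\ x \in pblock P x.
Proof. by rewrite -(cover_partition pP) => xP; rewrite pblock_mem ?mem_pblock. Qed.

Lemma sum_uline_block (c : {set gT} -> int) X g : X \in P -> g \in X ->
  (\sum_(Y in P) uline Y *~ c Y)%R g = c X.
Proof.
move=> XP gX; rewrite sum_ffunE (bigD1 X) //= big1 ?addr0.
  by rewrite ffunMzE ffunE gX mulrzz mul1r.
move=> Y /andP[YP nYX]; rewrite ffunMzE ffunE.
case gY: (g \in Y); last by rewrite mul0rz.
by rewrite (block_eq YP XP gY gX) eqxx in nYX.
Qed.

Lemma sum_uline_out (c : {set gT} -> int) g : g \notin G ->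
  (\sum_(Y in P) uline Y *~ c Y)%R g = 0%R.
Proof.
move=> gG; rewrite sum_ffunE big1 // => Y YP; rewrite ffunMzE ffunE.
case gY: (g \in Y); last by rewrite mul0rz.
by rewrite (subsetP (partitionS pP YP) _ gY) in gG.
Qed.

Lemma spanP a :
  Defs.span P a <-> inZG G a /\ (forall X, X \in P -> {in X &, forall x y, a x = a y}).
Proof.
split=> [[c ->]|[aG aP]].
  split=> [x xG | X XP x y xX yX]; first by rewrite sum_uline_out.
  by rewrite !(sum_uline_block _ XP).
exists (fun X => a (repr X)); apply/ffunP => g.
have [gG|gG] := boolP (g \in G); last by rewrite sum_uline_out ?aG.
have [gP gg] := pblockP gG.
by rewrite (sum_uline_block _ gP gg); apply: aP gP _ _ gg (mem_repr _ gg).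
Qed.

Lemma span_uline X : X \in P -> Defs.span P (uline X).
Proof.
move=> XP; apply/spanP; split=> [x xG | Y YP x y xY yY]; rewrite !ffunE.
  by case xX: (x \in X); rewrite // (subsetP (partitionS pP XP) _ xX) in xG.
suff -> : (x \in X) = (y \in X) by [].
by apply/idP/idP => [xX|yX]; [rewrite (block_eq XP YP xX xY) | rewrite (block_eq XP YP yX yY)].
Qed.

End Partition.

Section SRing.
Variables (gT : finGroupType) (G : {group gT}) (P : {set {set gT}}).
Hypothesis sP : is_Sring G P.

Let pP : partition P G. Proof. by case: sP. Qed.
Let P1 : [set 1] \in P. Proof. by case: sP. Qed.

Lemma block1 X : X \in P -> 1 \in X -> X = [set 1].
Proof. by move=> XP X1; have := block_eq pP XP P1 X1 (set11 _). Qed.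

Lemma card_fibre_block X Y Z : X \in P -> Y \in P -> Z \in P ->
  {in Z &, forall g g', #|fibre G X Y g| = #|fibre G X Y g'|}.
Proof.
move=> XP YP ZP g g' gZ gZ'; case: sP => _ _ _ mulP.
have [_ /(_ Z ZP g g' gZ gZ')] :=
  (spanP pP _).1 (mulP _ _ (span_uline pP XP) (span_uline pP YP)).
by rewrite !gmul_uline => -[].
Qed.

Lemma not_primitive_of_block_closed (K : {group gT}) :
  K \subset G -> (forall X, X \in P -> {in X &, forall x y, x \in K -> y \in K}) ->
  K :!=: 1 -> K :!=: G -> ~ primitive_Sring G P.
Proof.
move=> sKG closedK K1 KG prim.
have AK : Asubgroup G P K.
  split=> //; exists [set X in P | X \subset K]; split.
    by apply/subsetP => X; rewrite inE => /andP[].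
  apply/setP => g; apply/idP/bigcupP => [gK | [X]]; last first.
    by rewrite inE => /andP[_ /subsetP]; apply.
  have [gP gg] := pblockP pP (subsetP sKG _ gK).
  exists (pblock P g); rewrite // inE gP.
  by apply/subsetP => y yg; apply: closedK gP _ _ gg yg gK.
by case: (prim K AK) => /eqP; rewrite ?(negbTE K1) ?(negbTE KG).
Qed.

Definition block_core (H : {set gT}) := [set g in G | pblock P g \subset H].

Lemma group_set_block_core (H : {group gT}) : group_set (block_core H).
Proof.
have tP := partition_trivIset pP.
apply/group_setP; split=> [|x y].
  by rewrite inE group1 (def_pblock tP P1 (set11 _)) sub1set group1.
rewrite !inE => /andP[xG xH] /andP[yG yH].
have xyG : x * y \in G by rewrite groupM.
have [xP xx] := pblockP pP xG; have [yP yy] := pblockP pP yG.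
have [xyP xyxy] := pblockP pP xyG.
rewrite xyG; apply/subsetP => z zxy.
have : 0 < #|fibre G (pblock P x) (pblock P y) z|.
  rewrite -(card_fibre_block xP yP xyP xyxy zxy) card_gt0.
  by apply/set0Pn; exists x; rewrite inE xG xx mulKg yy.
rewrite card_gt0 => /set0Pn[h]; rewrite inE => /and3P[_ hx hy].
by rewrite -(mulKVg h z) groupM //; [apply: (subsetP xH) | apply: (subsetP yH)].
Qed.

Lemma not_primitive_of_block_sub (H : {group gT}) W :
  H \proper G -> W \in P -> W != [set 1] -> W \subset H -> ~ primitive_Sring G P.
Proof.
move=> ltHG WP W1 WH; have tP := partition_trivIset pP.
pose K := Group (group_set_block_core H).
have sKH : K \subset H.
  by apply/subsetP => g; rewrite inE => /andP[gG /subsetP]; apply; case: (pblockP pP gG).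
apply: (@not_primitive_of_block_closed K).
- by apply/subsetP => g; rewrite inE => /andP[].
- move=> X XP x y xX yX; rewrite !inE (def_pblock tP XP xX) (def_pblock tP XP yX).
  by case/andP=> _ ->; rewrite (subsetP (partitionS pP XP) _ yX).
- have /set0Pn[w wW] := partition_neq0 pP WP.
  apply/trivgPn; exists w.
    by rewrite inE (subsetP (partitionS pP WP) _ wW) (def_pblock tP WP wW).
  by apply: contraNneq W1 => w1; apply/eqP/block1; rewrite -?w1.
- by apply/eqP => KG; move: ltHG; rewrite -KG properE sKH andbF.
Qed.

Definition block_stab (X : {set gT}) := [set g in G | [forall x in X, x * g \in X]].

Lemma group_set_block_stab X : group_set (block_stab X).
Proof.
apply/group_setP; split=> [|g g'].
  by rewrite inE group1; apply/forall_inP => x xX; rewrite mulg1.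
rewrite !inE => /andP[gG /forall_inP stab_g] /andP[g'G /forall_inP stab_g'].
by rewrite groupM //; apply/forall_inP => x xX; rewrite mulgA stab_g' ?stab_g.
Qed.

Lemma block_stabE X g : X \in P -> g \in G ->
  (g \in block_stab X) = (#|X^-1| <= #|fibre G X^-1 X g|)%N.
Proof.
move=> XP gG; have sXG := partitionS pP XP.
have sub_fibre : fibre G X^-1 X g \subset X^-1.
  by apply/subsetP => h; rewrite inE => /and3P[].
rewrite inE gG; apply/forall_inP/idP => [stab_g | le_X x xX].
  apply: subset_leq_card; apply/subsetP => h hXi.
  rewrite mem_invg in hXi.
  by rewrite inE -groupV (subsetP sXG _ hXi) mem_invg hXi stab_g.
have /eqP eqX : fibre G X^-1 X g == X^-1 by rewrite eqEcard sub_fibre.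
have : x^-1 \in fibre G X^-1 X g by rewrite eqX mem_invg invgK.
by rewrite inE invgK => /and3P[].
Qed.

Lemma not_primitive_of_block_stab X (K : {group gT}) :
  X \in P -> 1 \notin X -> K \subset block_stab X -> K :!=: 1 -> ~ primitive_Sring G P.
Proof.
move=> XP X1 sKS K1; case: sP => _ _ invP _.
pose S := Group (group_set_block_stab X).
have sXG := partitionS pP XP.
apply: (@not_primitive_of_block_closed S).
- by apply/subsetP => g; rewrite inE => /andP[].
- move=> Y YP x y xY yY; have sYG := partitionS pP YP.
  rewrite (block_stabE XP (subsetP sYG _ xY)) (block_stabE XP (subsetP sYG _ yY)).
  by rewrite (card_fibre_block (invP _ XP) XP YP xY yY).
- by apply: subG1_contra K1.
- apply/eqP => SG; have /set0Pn[x xX] := partition_neq0 pP XP.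
  have : x^-1 \in S by rewrite SG groupV (subsetP sXG).
  by rewrite inE => /andP[_ /forall_inP/(_ x xX)]; rewrite mulgV (negbTE X1).
Qed.

Lemma span_trivZG : G :!=: 1 ->
  {in P &, forall X Y, X != [set 1] -> Y != [set 1] -> X = Y} ->
  forall a, Defs.span P a <-> trivZG G a.
Proof.
move=> G1 uniqP a; split=> [|[m [n ->]]].
  case/(spanP pP) => aG aP; case/trivgPn: G1 => g0 g0G g01.
  have [g0P g0g0] := pblockP pP g0G.
  exists (a 1%g - a g0)%R, (a g0); apply/ffunP => g; rewrite trivial_elementE.
  have [->|g1] := eqVneq g 1; first by rewrite subrK.
  have [gG|gG] := boolP (g \in G); last by rewrite aG.
  have [gP gg] := pblockP pP gG.
  have block_neq1 h : h != 1 -> h \in pblock P h -> pblock P h != [set 1].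
    by move=> h1 hh; apply: contra h1 => /eqP eq1; rewrite eq1 inE in hh.
  have eq_block := uniqP _ _ gP g0P (block_neq1 _ g1 gg) (block_neq1 _ g01 g0g0).
  by apply: aP g0P _ _ _ g0g0; rewrite -eq_block.
apply/(spanP pP); split=> [g gG | Y YP x y xY yY]; rewrite !trivial_elementE.
  by rewrite (negbTE gG); case: eqP gG => // ->; rewrite group1.
have sYG := partitionS pP YP.
have [x1|x1] := eqVneq x 1.
  by move: xY; rewrite x1 => /(block1 YP) eqY; move: yY; rewrite eqY inE => ->.
have [y1|y1] := eqVneq y 1.
  by move: yY; rewrite y1 => /(block1 YP) eqY; move: xY; rewrite eqY inE (negbTE x1).
by rewrite (subsetP sYG _ xY) (subsetP sYG _ yY).
Qed.

Section Central.
Hypothesis cP : central_Sring G P.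

Lemma conj_block X x g : X \in P -> x \in X -> g \in G -> x ^ g \in X.
Proof.
move=> XP xX gG; have [_ commX] := cP (span_uline pP XP).
have gZ : inZG G (uline [set g]).
  by move=> y yG; rewrite ffunE inE; case: eqP yG => // ->; rewrite gG.
have /eqP := congr1 (fun f : Defs.grel gT => f (x * g)) (commX _ gZ).
rewrite /= !gmul_uline eqz_nat => /eqP eq_card.
apply: contraT => xgX; move: eq_card.
have -> : fibre G [set g] X (x * g) = set0.
  apply/setP => h; rewrite !inE; case: eqP => [->|]; last by rewrite andbF.
  by rewrite /= -conjgE (negbTE xgX) andbF.
rewrite cards0 => /eqP; rewrite cards_eq0 => /eqP/setP/(_ x).
by rewrite !inE (subsetP (partitionS pP XP) _ xX) xX mulKg eqxx.
Qed.

Section Camina.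
Variable H : {group gT}.
Hypotheses (nHG : H <| G) (camH : forall x, x \in G :\: H -> x *: H \subset x ^: G).

Let sHG : H \subset G. Proof. exact: normal_sub. Qed.

Lemma block_mulH X w k : X \in P -> w \in X -> w \notin H -> k \in H ->
  w * k \in X /\ k * w \in X.
Proof.
move=> XP wX wH kH; have wG := subsetP (partitionS pP XP) _ wX.
have wkX k' : k' \in H -> w * k' \in X.
  move=> k'H; have : w * k' \in w *: H by rewrite mem_lcoset mulKg.
  have /camH/subsetP/[apply]/imsetP[g gG ->] : w \in G :\: H by rewrite inE wH.
  exact: conj_block.
split; first exact: wkX.
by rewrite -(mulKVg w (k * w)) -conjgE wkX // memJ_norm // (subsetP (normal_norm nHG)).
Qed.

Lemma sub_block_stab X : X \in P -> [disjoint X & H] -> H \subset block_stab X.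
Proof.
move=> XP dXH; apply/subsetP => k kH; rewrite inE (subsetP sHG _ kH).
by apply/forall_inP => x xX; case: (block_mulH XP xX (negbT (disjointFr dXH xX)) kH).
Qed.

Definition fibre_out X Y g :=
  [set u in fibre G X Y g | (u \notin H) && (u^-1 * g \notin H)].

Lemma dvdn_card_fibre_out X Y g : X \in P -> Y \in P -> (#|H| %| #|fibre_out X Y g|)%N.
Proof.
move=> XP YP; apply: dvdn_card_mulr_closed => u k.
rewrite !inE => /andP[/and3P[uG uX uY] /andP[uH ugH]] kH.
have [ukX _] := block_mulH XP uX uH kH.
have [_ kY] := block_mulH YP uY ugH (groupVr kH).
have ukG : u * k \in G := groupM uG (subsetP sHG _ kH).
by rewrite invMg -mulgA ukG ukX kY groupMr // groupMl ?groupV // (negbTE uH) (negbTE ugH).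
Qed.

Lemma card_fibre_inH X Y h : h \in H ->
  #|fibre G X Y h| = (#|fibre G X Y h :&: H| + #|fibre_out X Y h|)%N.
Proof.
move=> hH; rewrite -(cardsID H); congr (_ + _)%N; apply: eq_card => u.
by rewrite !inE groupMr // groupV; case: (u \in H); rewrite /= ?andbT ?andbF.
Qed.

Lemma card_fibre_outH X Y z : X \in P -> Y \in P -> X != Y -> z \in X -> z \notin H ->
  #|fibre G X Y z| = (#|Y :&: H| + #|fibre_out X Y z|)%N.
Proof.
move=> XP YP nXY zX zH; have zG := subsetP (partitionS pP XP) _ zX.
have fibre_notH u : u \in fibre G X Y z -> u \notin H.
  rewrite inE => /and3P[_ _ uY]; apply: contra nXY => uH.
  have [_ uzX] := block_mulH XP zX zH (groupVr uH).
  by rewrite (block_eq pP XP YP uzX uY).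
rewrite -(cardsID [set u | u^-1 * z \in H]); congr (_ + _)%N; last first.
  apply: eq_card => u; rewrite in_setD [u \in fibre_out _ _ _]inE.
  by case uT: (u \in fibre G X Y z); rewrite ?andbF //= fibre_notH // inE andbT.
have inj_z : injective (fun y => z * y^-1) by move=> y y' /mulgI/invg_inj.
rewrite -(card_imset (Y :&: H) inj_z); apply: eq_card => u; apply/idP/imsetP.
  rewrite !inE => /andP[/and3P[_ _ uY] uzH].
  by exists (u^-1 * z); rewrite ?inE ?uY // invMg invgK mulKVg.
case=> y /setIP[yY yH] ->; have [zyX _] := block_mulH XP zX zH (groupVr yH).
rewrite !inE invMg invgK mulgKV yY yH zyX andbT.
by rewrite !andbT groupM ?groupV // (subsetP (partitionS pP YP) _ yY).
Qed.

Lemma block_mulVH X Y h z : X \in P -> Y \in P -> X != Y -> 1 \notin Y ->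
  h \in X -> h \in H -> z \in X -> z \notin H ->
  {in Y :&: H, forall y, h * y^-1 \in X}.
Proof.
move=> XP YP nXY Y1 hX hH zX zH.
have inj_h : injective (fun u => u^-1 * h) by move=> u v /mulIg/invg_inj.
have sub_YH : (fun u => u^-1 * h) @: (fibre G X Y h :&: H) \subset Y :&: H.
  apply/subsetP => _ /imsetP[u /setIP[] /[!inE] /and3P[_ _ uY] uH ->].
  by rewrite uY groupM ?groupV.
have lt_YH : (#|Y :&: H| < #|H|)%N.
  apply/proper_card/properP; split; first exact: subsetIr.
  by exists 1; rewrite ?inE ?(negbTE Y1).
(* Modulo |H| the two sides of [card_fibre_block] reduce to these numbers, both < |H|. *)
have eq_YH : #|fibre G X Y h :&: H| = #|Y :&: H|.
  have := congr1 (modn^~ #|H|) (card_fibre_block XP YP XP hX zX).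
  rewrite card_fibre_inH // card_fibre_outH //.
  case/dvdnP: (dvdn_card_fibre_out h XP YP) => a ->.
  case/dvdnP: (dvdn_card_fibre_out z XP YP) => b ->.
  rewrite ![(_ + _ * _)%N]addnC !modnMDl !modn_small //.
  by rewrite (leq_ltn_trans _ lt_YH) // -(card_imset _ inj_h) subset_leq_card.
have /eqP eq_im : (fun u => u^-1 * h) @: (fibre G X Y h :&: H) == Y :&: H.
  by rewrite eqEcard sub_YH card_imset // eq_YH /=.
move=> y; rewrite -eq_im => /imsetP[u /setIP[] /[!inE] /and3P[_ uX _] _ ->].
by rewrite invMg invgK mulKVg.
Qed.

Lemma block_mulH_in X Y x y : X \in P -> Y \in P -> X != Y ->
  ~~ (X \subset H) -> 1 \notin Y ->
  x \in X -> x \in H -> y \in Y -> y \in H -> x * y \in X.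
Proof.
move=> XP YP nXY /subsetPn[z zX zH] Y1 xX xH yY yH.
suff powX k : (x * y^-1 ^+ k \in X) && (x * y^-1 ^+ k \in H).
  by have /andP[] := powX #[y^-1].-1; rewrite -invg_expg invgK.
elim: k => [|k /andP[xyX xyH]]; first by rewrite mulg1 xX xH.
by rewrite expgSr mulgA (block_mulVH XP YP nXY Y1 xyX xyH zX zH) ?inE ?yY // groupM ?groupV.
Qed.

Lemma nontrivial_block_unique :
  (forall W, W \in P -> W != [set 1] -> ~~ (W \subset H) && ~~ [disjoint W & H]) ->
  {in P &, forall X Y, X != [set 1] -> Y != [set 1] -> X = Y}.
Proof.
move=> meetH X Y XP YP X1 Y1; apply/eqP; apply: contraT => nXY.
have notin1 W : W \in P -> W != [set 1] -> 1 \notin W.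
  by move=> WP; apply: contra => /(block1 WP)->.
have /andP[XnH] := meetH _ XP X1; rewrite -setI_eq0 => /set0Pn[x /setIP[xX xH]].
have /andP[YnH] := meetH _ YP Y1; rewrite -setI_eq0 => /set0Pn[y /setIP[yY yH]].
have xyX := block_mulH_in XP YP nXY XnH (notin1 _ YP Y1) xX xH yY yH.
have nYX : Y != X by rewrite eq_sym.
have yxY := block_mulH_in YP XP nYX YnH (notin1 _ XP X1) yY yH xX xH.
have := conj_block YP yxY (groupVr (subsetP sHG _ xH)).
rewrite conjgE invgK mulgK => xyY.
by rewrite (block_eq pP XP YP xyX xyY) eqxx in nXY.
Qed.

End Camina.
End Central.
End SRing.

Theorem theorem1p5 (gT : finGroupType) (G : {group gT}) :
  Camina_group G -> generalized_B_group G.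
Proof.
case=> H [nHG H1 HG camH] P sP cP [_ not_trivial].
have ltHG : H \proper G by rewrite properEneq HG normal_sub.
case: (boolP [exists W in P, (W != [set 1]) && (W \subset H)]).
  case/exists_inP => W WP /andP[W1 WH].
  exact: not_primitive_of_block_sub ltHG WP W1 WH.
move=> noW_sub.
case: (boolP [exists X in P, [disjoint X & H]]).
  case/exists_inP => X XP dXH.
  apply: (not_primitive_of_block_stab sP XP _ (sub_block_stab sP cP nHG camH XP dXH) H1).
  by rewrite (disjointFl dXH (group1 H)).
move=> noX_disj _; apply: not_trivial; apply: (span_trivZG sP).
  exact: subG1_contra (normal_sub nHG) H1.
apply: (nontrivial_block_unique sP cP nHG camH) => W WP W1; apply/andP; split.
  by apply: contra noW_sub => WH; apply/exists_inP; exists W; rewrite ?W1.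
by apply: contra noX_disj => dWH; apply/exists_inP; exists W.
Qed.
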